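(* $str(Q_2)=6$, $str(Q_3)=11$, $str(Q_4)=21$ and $str(Q_5)=40$.
   Context: $Q_n$ is the $n$-dimensional hypercube (vertex set $\mathbb Z_2^n$, adjacency iff differing in exactly one coordinate), of order $2^n$. For a graph $G$ of order $p$, a numbering is a bijection $f:V(G)\to[1,p]$; $str_f(G)=\max\{f(u)+f(v): uv\in E(G)\}$ and $str(G)=\min_f str_f(G)$. *)

From mathcomp Require Import all_boot.
Set Implicit Arguments. Unset Strict Implicit. Unset Printing Implicit Defensive.

Definition qvert (n : nat) := {ffun 'I_n -> bool}.

Definition qadj (n : nat) (u v : qvert n) : bool :=
  #|[set i : 'I_n | u i != v i]| == 1.

Definition qorder (n : nat) : nat := #|{: qvert n}|.

(* A numbering is a bijection f : V -> [1, p]; we represent it as an injective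
   (hence bijective, by cardinality) map g : V -> 'I_p, with label f v = g v + 1. *)
Definition is_numbering (n : nat) (g : {ffun qvert n -> 'I_(qorder n)}) : bool :=
  injectiveb g.

Definition label (n : nat) (g : {ffun qvert n -> 'I_(qorder n)}) (v : qvert n) : nat :=
  (g v).+1.

Definition str_f (n : nat) (g : {ffun qvert n -> 'I_(qorder n)}) : nat :=
  \max_(e : qvert n * qvert n | qadj e.1 e.2) (label g e.1 + label g e.2).

(* str(G) = min over numberings f of str_f(G).  The initial value 2p is an upper
   bound of every str_f, and numberings exist, so this is the true minimum. *)
Definition str (n : nat) : nat :=
  \big[minn/(qorder n).*2]_(g : {ffun qvert n -> 'I_(qorder n)} | is_numbering g) str_f g.

From mathcomp Require Import all_boot all_order zify.
Set Implicit Arguments. Unset Strict Implicit. Unset Printing Implicit Defensive.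

(* Upper bound: an explicit numbering of Q_n whose edge sums are all at most
   the claimed value.

   Lower bound: suppose every set of m vertices of Q_n has at least c > 0
   neighbours.  In any numbering, the m vertices carrying the labels
   p - m + 1, ..., p have at least c neighbours; these carry c distinct
   labels, so one of them has label at least c, and the corresponding edge
   has label sum at least c + (p - m + 1). *)

Lemma qorderE n : qorder n = 2 ^ n.
Proof. by rewrite /qorder card_ffun card_bool card_ord. Qed.

Definition nbhd n (A : {set qvert n}) : {set qvert n} :=
  [set x | [exists t in A, qadj t x]].

Section Numbering.
Variables (n : nat) (g : {ffun qvert n -> 'I_(qorder n)}).

Lemma label_edge_le u v : qadj u v -> label g u + label g v <= str_f g.
Proof. by move=> uv; apply: (leq_bigmax_cond (u, v)). Qed.

Lemma str_f_le_double : str_f g <= (qorder n).*2.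
Proof.
by apply/bigmax_leqP => e _; rewrite -addnn leq_add // /label ltn_ord.
Qed.

Hypothesis g_inj : injective g.

(* If all vertices of A have label at least K, the neighbours of A carry
   distinct labels in [1, str_f g - K], hence there are at most str_f g - K. *)
Lemma card_nbhd_le (A : {set qvert n}) K :
  (forall t, t \in A -> K <= label g t) -> #|nbhd A| <= str_f g - K.
Proof.
move=> AK; rewrite cardE -(size_map (fun x => val (g x))).
rewrite -(size_iota 0 (str_f g - K)).
apply: uniq_leq_size => [|_ /mapP [x + ->]].
  by rewrite map_inj_uniq ?enum_uniq // => x y /val_inj /g_inj.
rewrite mem_enum inE => /existsP [t /andP [tA tx]].
have := label_edge_le tx; have := AK t tA; rewrite mem_iota /label /=; lia.
Qed.

Lemma top_labels m :
  m <= qorder n ->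
  exists2 A : {set qvert n}, #|A| = m & forall t, t \in A -> qorder n - m < label g t.
Proof.
move=> le_m; have [h gK hK] : bijective g.
  by apply: (inj_card_bij g_inj); rewrite card_ord.
pose top (j : 'I_m) : 'I_(qorder n) := rev_ord (widen_ord le_m j).
exists [set h (top j) | j : 'I_m].
  rewrite card_imset ?card_ord // => i j /(can_inj hK) /rev_ord_inj /(congr1 val) /=.
  exact: val_inj.
move=> _ /imsetP [j _ ->]; rewrite /label hK /=; have := ltn_ord j; lia.
Qed.

Lemma str_f_ge m c :
  0 < c -> m <= qorder n -> (forall A : {set qvert n}, #|A| = m -> c <= #|nbhd A|) ->
  c + (qorder n - m + 1) <= str_f g.
Proof.
move=> c_gt0 le_m iso; have [A cardA topA] := top_labels le_m.
have := card_nbhd_le topA; have := iso A cardA; lia.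
Qed.

End Numbering.

Lemma exists_numbering n : exists g : {ffun qvert n -> 'I_(qorder n)}, is_numbering g.
Proof.
exists [ffun v => enum_rank v].
by apply/injectiveP => u v; rewrite !ffunE => /enum_rank_inj.
Qed.

Lemma str_le n (g : {ffun qvert n -> 'I_(qorder n)}) : is_numbering g -> str n <= str_f g.
Proof.
move=> g_num; have := Order.TotalTheory.bigmin_le_cond (qorder n).*2 (@str_f n) g_num.
by rewrite minEnat leEnat.
Qed.

Lemma str_ge n L :
  (forall g : {ffun qvert n -> 'I_(qorder n)}, is_numbering g -> L <= str_f g) -> L <= str n.
Proof.
move=> L_le; have [g0 g0_num] := exists_numbering n.
have L_le_double := leq_trans (L_le g0 g0_num) (str_f_le_double g0).
by elim/big_ind: (str n) => // x y; rewrite leq_min => -> ->.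
Qed.

Lemma str_ge_isoperimetric n m c :
  0 < c -> m <= 2 ^ n -> (forall A : {set qvert n}, #|A| = m -> c <= #|nbhd A|) ->
  c + (2 ^ n - m + 1) <= str n.
Proof.
rewrite -qorderE => c_gt0 le_m iso; apply: str_ge => g /injectiveP g_inj.
exact: str_f_ge.
Qed.

Lemma str_le_labelling n (f : qvert n -> nat) B :
  (forall v, 0 < f v <= 2 ^ n) -> injective f -> (forall u v, qadj u v -> f u + f v <= B) ->
  str n <= B.
Proof.
rewrite -qorderE => f_range f_inj f_edge.
have f_lt v : (f v).-1 < qorder n by have := f_range v; lia.
pose g : {ffun qvert n -> 'I_(qorder n)} := [ffun v => Ordinal (f_lt v)].
have labelE v : label g v = f v by rewrite /label ffunE prednK //; case/andP: (f_range v).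
have g_num : is_numbering g.
  by apply/injectiveP => u v guv; apply: f_inj; rewrite -!labelE /label guv.
apply: leq_trans (str_le g_num) _; apply/bigmax_leqP => -[u v] /= uv.
by rewrite !labelE f_edge.
Qed.

Fixpoint tuples (T : Type) (A : seq T) (k : nat) : seq (seq T) :=
  if k is k'.+1 then [seq x :: s | x <- A, s <- tuples A k'] else [:: [::]].

Lemma mem_tuples (T : eqType) (A : seq T) k s :
  (s \in tuples A k) = (size s == k) && all (mem A) s.
Proof.
elim: k s => [|k IH] [|x s] //=.
- by apply/negbTE/negP => /allpairsP [[y z]] /= [_ _].
- rewrite eqSS; apply/allpairsP/and3P => [[[y z]] /= [Ay] + [-> ->]|[sz Ax As]].
    by rewrite IH => /andP [-> ->]; rewrite Ay.
  by exists (x, s); rewrite IH sz As.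
Qed.

Lemma tuples_uniq (T : eqType) (A : seq T) k : uniq A -> uniq (tuples A k).
Proof.
move=> uA; elim: k => [|k IH] //=; apply: allpairs_uniq => // -[x s] [y t] _ _.
by case=> -> ->.
Qed.

Definition words (n : nat) : seq (seq bool) := tuples [:: false; true] n.

Lemma mem_words n (s : seq bool) : (s \in words n) = (size s == n).
Proof.
by rewrite mem_tuples (_ : all _ s = true) ?andbT //; apply/allP => -[].
Qed.

Definition word n (v : qvert n) : seq bool := [seq v i | i <- enum 'I_n].

Lemma nth_word n (v : qvert n) (i : 'I_n) : nth false (word v) i = v i.
Proof. by rewrite /word (nth_map i) ?nth_ord_enum // size_enum_ord. Qed.

Lemma size_word n (v : qvert n) : size (word v) = n.
Proof. by rewrite size_map size_enum_ord. Qed.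

Lemma word_inj n : injective (@word n).
Proof. by move=> u v uv; apply/ffunP => i; rewrite -!nth_word uv. Qed.

Lemma perm_words n : perm_eq [seq word v | v : qvert n] (words n).
Proof.
apply: uniq_perm; rewrite ?tuples_uniq // ?(map_inj_uniq (@word_inj n)) ?enum_uniq //.
move=> s; rewrite mem_words; apply/mapP/eqP => [[v _ ->]|sz]; first exact: size_word.
exists [ffun i : 'I_n => nth false s i]; first by rewrite mem_enum.
apply: (@eq_from_nth _ false); first by rewrite size_word.
move=> i; rewrite sz => lt_in.
by rewrite (nth_word _ (Ordinal lt_in)) ffunE.
Qed.

Definition wadj (n : nat) (s t : seq bool) : bool :=
  count (fun i => nth false s i != nth false t i) (iota 0 n) == 1.

Lemma qadj_wadj n (u v : qvert n) : qadj u v = wadj n (word u) (word v).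
Proof.
rewrite /qadj /wadj cardsE cardE /enum_mem size_filter -val_enum_ord count_map enumT.
by congr (_ == 1); apply: eq_count => i /=; rewrite !nth_word.
Qed.

Definition wnbhd_size (n : nat) (T : seq (seq bool)) : nat :=
  count (fun s => has (fun t => wadj n t s) T) (words n).

Lemma card_nbhdE n (A : {set qvert n}) : #|nbhd A| = wnbhd_size n [seq word t | t in A].
Proof.
rewrite /wnbhd_size -(permP (perm_words n)) count_map.
rewrite enumT cardE /enum_mem size_filter -enumT.
apply: eq_count => x; rewrite !inE has_map; apply/existsP/hasP => [[t /andP [tA tx]]|[t]].
  by exists t; rewrite ?mem_enum //= -qadj_wadj.
by rewrite mem_enum /= -qadj_wadj => tA tx; exists t; rewrite tA.
Qed.

Definition isoperimetric_check (n m c : nat) : bool :=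
  all (fun T => ~~ uniq T || (c <= wnbhd_size n T)) (tuples (words n) m).

Lemma isoperimetric_checkP n m c :
  isoperimetric_check n m c -> forall A : {set qvert n}, #|A| = m -> c <= #|nbhd A|.
Proof.
move=> /allP check A cardA; rewrite card_nbhdE.
have uA : uniq [seq word t | t in A] by rewrite map_inj_uniq ?enum_uniq //; apply: word_inj.
have inT : [seq word t | t in A] \in tuples (words n) m.
  rewrite mem_tuples size_map -cardE cardA eqxx /=.
  by apply/allP => _ /mapP [t _ ->]; rewrite /= mem_words size_word.
by have := check _ inT; rewrite uA.
Qed.

(* A labelling of words is given by a list L: the word s gets the label
   nth 0 L (code s), where code s reads s as a binary number, least
   significant bit first. *)
Definition code (s : seq bool) : nat := foldr (fun (b : bool) acc => b + acc.*2) 0 s.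

Definition lab (L : seq nat) (s : seq bool) : nat := nth 0 L (code s).

Definition labelling_check (n : nat) (L : seq nat) (B : nat) : bool :=
  [&& all (fun s => 0 < lab L s <= 2 ^ n) (words n),
      uniq [seq lab L s | s <- words n] &
      all (fun s => all (fun t => ~~ wadj n s t || (lab L s + lab L t <= B)) (words n)) (words n)].

Lemma labelling_checkP n L B : labelling_check n L B -> str n <= B.
Proof.
have inW (v : qvert n) : word v \in words n by rewrite mem_words size_word.
case/and3P => /allP range uL /allP edges.
apply: (@str_le_labelling n (fun v => lab L (word v))) => [v||u v].
- exact: range.
- have := perm_uniq (perm_map (lab L) (perm_words n)); rewrite uL -map_comp => uLw.
  by apply/injectiveP; rewrite /injectiveb /dinjectiveb.
- by rewrite qadj_wadj => uv; have := allP (edges _ (inW u)) _ (inW v); rewrite uv.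
Qed.

Lemma str_eq_of_checks n m c L B :
  0 < c -> m <= 2 ^ n -> c + (2 ^ n - m + 1) = B ->
  isoperimetric_check n m c -> labelling_check n L B -> str n = B.
Proof.
move=> c_gt0 le_m <- /isoperimetric_checkP iso /labelling_checkP ub.
by apply/eqP; rewrite eqn_leq ub str_ge_isoperimetric.
Qed.

Definition L2 : seq nat := [:: 3; 2; 1; 4].
Definition L3 : seq nat := [:: 2; 7; 5; 4; 8; 1; 3; 6].
Definition L4 : seq nat := [:: 9; 6; 5; 11; 1; 15; 16; 3; 7; 10; 12; 8; 14; 4; 2; 13].
Definition L5 : seq nat :=
  [:: 19; 3; 1; 32; 13; 27; 24; 5; 10; 30; 28; 7; 18; 4; 6; 31;
      14; 26; 25; 2; 21; 12; 15; 20; 22; 8; 11; 29; 17; 16; 23; 9].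

Theorem mainTheorem19 :
  [/\ str 2 = 6, str 3 = 11, str 4 = 21 & str 5 = 40].
Proof.
split.
- by apply: (@str_eq_of_checks 2 1 2 L2); vm_compute.
- by apply: (@str_eq_of_checks 3 1 3 L3); vm_compute.
- by apply: (@str_eq_of_checks 4 2 6 L4); vm_compute.
- by apply: (@str_eq_of_checks 5 3 10 L5); vm_compute.
Qed.
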